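(* In the discrete torus model with frame group $\mathbb{Z}_4$ and its universal calculus (context), the torsion-free and cotorsion-free spin connections are exactly \[A_{\bar1}=\alpha e_1+\beta e_2,\quad A_{\bar2}=\tfrac12(-\alpha+\beta-\gamma-\delta-s_1)e_1+\tfrac12(-\alpha-\beta+\gamma-\delta-s_2)e_2,\quad A_{\bar3}=\gamma e_1+\delta e_2,\] for functions $\alpha,\beta,\gamma,\delta$ such that $a=\gamma-\alpha$ and $b=\beta-\delta$ satisfy $(R_1+R_2)a=0$ and $(R_1+R_2)b=0$, where $s_1=\bar\partial^2\Theta_1$, $s_2=\bar\partial^1\Theta_2$. The covariant derivative is \[\nabla e_1=(b-s_1)e_1\otimes e_1+a\,e_1\otimes e_2+(a-s_2)e_2\otimes e_1-b\,e_2\otimes e_2,\] \[\nabla e_2=-a\,e_1\otimes e_1+(b-s_1)e_1\otimes e_2+b\,e_2\otimes e_1+(a-s_2)e_2\otimes e_2.\]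
   Context: Discrete torus model: $\Sigma=\mathbb{Z}_2\times\mathbb{Z}_2$, $x\to y$ iff $y-x\in\{(1,0),(0,1)\}$; diagonal zweibein $e_{1,x,x+(1,0)}=\Theta_1(x)^{-1}$, $e_{2,x,x+(0,1)}=\Theta_2(x)^{-1}$, $\Theta_a$ nowhere-vanishing with $\Theta_1R_1\Theta_2=\Theta_2R_2\Theta_1$; $R_1f(x)=f(x+(1,0))$, $R_2f(x)=f(x+(0,1))$, $\bar\partial^a=R_a-\mathrm{id}$; $e_af=R_a(f)e_a$, $\mathrm{d}f=\sum_a(\bar\partial^af)\Theta_ae_a$. Two-forms: $e_1\wedge e_2=-e_2\wedge e_1$, $e_a\wedge e_a=0$; $\mathrm{d}e_1=(\bar\partial^1\Theta_2)e_1\wedge e_2$, $\mathrm{d}e_2=-(\bar\partial^2\Theta_1)e_1\wedge e_2$. Frame group $\mathbb{Z}_4=\{\bar0,\bar1,\bar2,\bar3\}$ acting on $V=\mathrm{span}\{e_1,e_2\}$ by quarter rotations ($\bar1$: $e_1\mapsto e_2$, $e_2\mapsto-e_1$), with universal calculus $\mathcal C=\{\bar1,\bar2,\bar3\}$; $f^i=i-\bar0$, so $f^{\bar1}\triangleright e_1=e_2-e_1$, $f^{\bar1}\triangleright e_2=-e_1-e_2$, $f^{\bar2}\triangleright e_a=-2e_a$, $f^{\bar3}\triangleright e_1=-e_1-e_2$, $f^{\bar3}\triangleright e_2=e_1-e_2$. A spin connection is a triple of 1-forms $A_{\bar1},A_{\bar2},A_{\bar3}$. Torsion-free: $\mathrm{d}e_a+\sum_iA_i\wedge(f^i\triangleright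 e_a)=0$; cotorsion-free: $\mathrm{d}e_a+\sum_i(f^{-i}\triangleright e_a)\wedge A_i=0$ (inverse $-i$ in $\mathbb{Z}_4$). Covariant derivative $\nabla(\sum\alpha^ae_a)=\sum\mathrm{d}\alpha^a\otimes e_a-\sum_{i,a}\alpha^aA_i\otimes f^i\triangleright e_a$. *)

From HB Require Import structures.
From mathcomp Require Import all_boot all_order all_algebra.
Set Implicit Arguments. Unset Strict Implicit. Unset Printing Implicit Defensive.
Import Order.TTheory GRing.Theory Num.Theory.
Local Open Scope ring_scope.

Definition Sigma : Type := ('Z_2 * 'Z_2)%type.

Definition Fun (R : Type) := Sigma -> R.

(* Index of the frame: o1 <-> e_1, o2 <-> e_2 *)
Definition o1 : 'I_2 := ord0.
Definition o2 : 'I_2 := ord_max.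

(* A one-form sum_a f_a e_a, stored by its left coefficient functions. *)
Definition Form1 (R : Type) := 'I_2 -> Fun R.
(* An element sum_{a,b} t_{ab} e_a (x) e_b of Omega^1 (x) Omega^1. *)
Definition Form11 (R : Type) := 'I_2 -> 'I_2 -> Fun R.
(* A two-form is f e_1 /\ e_2, stored by f : Fun R. *)

Definition mkF1 (R : Type) (f g : Fun R) : Form1 R :=
  fun a => if a == o1 then f else g.
Definition mkF11 (R : Type) (t11 t12 t21 t22 : Fun R) : Form11 R :=
  fun a b => if a == o1 then (if b == o1 then t11 else t12)
             else (if b == o1 then t21 else t22).

Section Model.
Variable R : numFieldType.

Definition shift (a : 'I_2) (f : Fun R) : Fun R :=
  fun x => f (x.1 + (a == o1)%:R, x.2 + (a == o2)%:R)%R.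

Definition dbar (a : 'I_2) (f : Fun R) : Fun R := fun x => shift a f x - f x.

Definition dfun (Th : Form1 R) (f : Fun R) : Form1 R :=
  fun a x => dbar a f x * Th a x.

(* Wedge product of one-forms, using e_a f = R_a(f) e_a,
   e_a /\ e_a = 0, e_2 /\ e_1 = - e_1 /\ e_2; result is the coefficient
   of e_1 /\ e_2. *)
Definition wedge (u v : Form1 R) : Fun R :=
  fun x => u o1 x * shift o1 (v o2) x - u o2 x * shift o2 (v o1) x.

Definition de (Th : Form1 R) (a : 'I_2) : Fun R :=
  if a == o1 then dbar o1 (Th o2) else fun x => - dbar o2 (Th o1) x.

(* Vectors of V = span{e_1, e_2} (constant coefficients) *)
Definition Vec := 'I_2 -> R.
Definition ebasis (c : 'I_2) : Vec := fun b => (c == b)%:R.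
Definition cform (v : Vec) : Form1 R := fun b _ => v b.

Definition rot1 (v : Vec) : Vec := fun b => if b == o1 then - v o2 else v o1.
Definition frame_act (g : 'Z_4) (v : Vec) : Vec := iter (nat_of_ord g) rot1 v.
Definition fact (g : 'Z_4) (v : Vec) : Vec := fun b => frame_act g v b - v b.

(* A spin connection: one-forms A_i, i in C = {1bar,2bar,3bar}
   (the value at 0bar is irrelevant and never used). *)
Definition torsion_free (Th : Form1 R) (A : 'Z_4 -> Form1 R) : Prop :=
  forall (a : 'I_2) (x : Sigma),
    de Th a x + \sum_(i : 'Z_4 | i != 0) wedge (A i) (cform (fact i (ebasis a))) x = 0.

Definition cotorsion_free (Th : Form1 R) (A : 'Z_4 -> Form1 R) : Prop :=
  forall (a : 'I_2) (x : Sigma),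
    de Th a x + \sum_(i : 'Z_4 | i != 0) wedge (cform (fact (- i) (ebasis a))) (A i) x = 0.

Definition nabla (Th : Form1 R) (A : 'Z_4 -> Form1 R) (al : Form1 R) : Form11 R :=
  fun a b x => dfun Th (al b) a x
    - \sum_(c < 2) \sum_(i : 'Z_4 | i != 0) al c x * A i a x * fact i (ebasis c) b.

Definition eform (c : 'I_2) : Form1 R := fun a _ => (c == a)%:R.

End Model.

From HB Require Import structures.
From mathcomp Require Import all_boot all_order all_algebra.
From mathcomp Require Import ring.
From Stdlib Require Import FunctionalExtensionality.
Import Order.TTheory GRing.Theory Num.Theory.
Local Open Scope ring_scope.
Set Implicit Arguments. Unset Strict Implicit.

(* Torsion-freeness is a pointwise linear system which solves for A_2 in terms
   of A_1 and A_3. Cotorsion-freeness involves the coefficients shifted by R_a;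
   adding the torsion equation at x + e_a cancels the A_2 terms and the d e_a
   terms (R_a is an involution on Z_2 x Z_2), leaving exactly (R_1 + R_2) a = 0,
   resp. (R_1 + R_2) b = 0. The covariant derivative is a direct computation from
   the action of the f^i on V. *)

Lemma sum_Z4_nonzero (V : zmodType) (F : 'Z_4 -> V) :
  \sum_(i : 'Z_4 | i != 0) F i = F 1 + F 2%:R + F 3%:R.
Proof.
rewrite big_mkcond /= !big_ord_recl big_ord0 /= add0r addr0 !addrA.
by congr (_ + _ + _); congr F; apply: val_inj.
Qed.

Lemma addZ2K (z c : 'Z_2) : z + c + c = z.
Proof. by case: c => [[|[|?]] ?]; rewrite ?addr0 //; case: z => [[|[|?]] ?]; apply: val_inj. Qed.

Lemma eq_of_subr_scale (V : pzRingType) (x y c z : V) : z = 0 -> x - y = c * z -> x = y.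
Proof. by move=> ->; rewrite mulr0 => /eqP; rewrite subr_eq0 => /eqP. Qed.

Lemma ord2P (a : 'I_2) : a = o1 \/ a = o2.
Proof. by case: a => [[|[|?]] ?]; [left|right|]; try apply: val_inj. Qed.

Section DiscreteTorus.
Variable R : numFieldType.

Lemma form1P (u v : Form1 R) :
  (forall x, u o1 x = v o1 x /\ u o2 x = v o2 x) -> u = v.
Proof.
move=> uv; apply: functional_extensionality => a; apply: functional_extensionality => x.
by have [] := uv x; have [->|->] := ord2P a.
Qed.

Lemma mkF1_eta (u : Form1 R) : u = mkF1 (u o1) (u o2).
Proof. exact: form1P. Qed.

Definition torsion (Th : Form1 R) (A : 'Z_4 -> Form1 R) (a : 'I_2) : Fun R :=
  fun x => de Th a x + \sum_(i : 'Z_4 | i != 0) wedge (A i) (cform (fact i (ebasis R a))) x.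

Definition cotorsion (Th : Form1 R) (A : 'Z_4 -> Form1 R) (a : 'I_2) : Fun R :=
  fun x => de Th a x + \sum_(i : 'Z_4 | i != 0) wedge (cform (fact (- i) (ebasis R a))) (A i) x.

(* [s1] and [s2] stand for [dbar o2 Theta1] and [dbar o1 Theta2]. *)
Definition torsion_free_A2 (s1 s2 al be ga dl : Fun R) : Form1 R :=
  mkF1 (fun x => (- al x + be x - ga x - dl x - s1 x) / 2)
       (fun x => (- al x - be x + ga x - dl x - s2 x) / 2).

Variables (Th : Form1 R) (A : 'Z_4 -> Form1 R).

Let A2 := torsion_free_A2 (dbar o2 (Th o1)) (dbar o1 (Th o2))
            (A 1 o1) (A 1 o2) (A 3%:R o1) (A 3%:R o2).
Let a := fun y => A 3%:R o1 y - A 1 o1 y.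
Let b := fun y => A 1 o2 y - A 3%:R o2 y.

Lemma torsion_o1E x : torsion Th A o1 x =
  de Th o1 x + A 1 o1 x + A 1 o2 x + 2 * A 2%:R o2 x - A 3%:R o1 x + A 3%:R o2 x.
Proof.
by rewrite /torsion sum_Z4_nonzero /wedge /cform /shift /fact /frame_act /= /rot1 /ebasis /=; ring.
Qed.

Lemma torsion_o2E x : torsion Th A o2 x =
  de Th o2 x - A 1 o1 x + A 1 o2 x - 2 * A 2%:R o1 x - A 3%:R o1 x - A 3%:R o2 x.
Proof.
by rewrite /torsion sum_Z4_nonzero /wedge /cform /shift /fact /frame_act /= /rot1 /ebasis /=; ring.
Qed.

Lemma cotorsion_o1E x : cotorsion Th A o1 x =
  de Th o1 x - shift o1 (A 1 o2) x + shift o2 (A 1 o1) x - 2 * shift o1 (A 2%:R o2) x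
  - shift o1 (A 3%:R o2) x - shift o2 (A 3%:R o1) x.
Proof.
by rewrite /cotorsion sum_Z4_nonzero /wedge /cform /fact /frame_act /= /rot1 /ebasis /=; ring.
Qed.

Lemma cotorsion_o2E x : cotorsion Th A o2 x =
  de Th o2 x + shift o1 (A 1 o2) x + shift o2 (A 1 o1) x + 2 * shift o2 (A 2%:R o1) x
  - shift o1 (A 3%:R o2) x + shift o2 (A 3%:R o1) x.
Proof.
by rewrite /cotorsion sum_Z4_nonzero /wedge /cform /fact /frame_act /= /rot1 /ebasis /=; ring.
Qed.

Lemma cotorsion_torsion_o1 x :
  cotorsion Th A o1 x + shift o1 (torsion Th A o1) x = - (shift o1 a x + shift o2 a x).
Proof.
rewrite cotorsion_o1E [shift o1 (torsion _ _ _) x]/shift torsion_o1E.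
case: x => x1 x2; rewrite /de /dbar /a /shift /= ?addr0 addZ2K; ring.
Qed.

Lemma cotorsion_torsion_o2 x :
  cotorsion Th A o2 x + shift o2 (torsion Th A o2) x = shift o1 b x + shift o2 b x.
Proof.
rewrite cotorsion_o2E [shift o2 (torsion _ _ _) x]/shift torsion_o2E.
case: x => x1 x2; rewrite /de /dbar /b /shift /= ?addr0 addZ2K; ring.
Qed.

Lemma torsion_freeP : torsion_free Th A <-> A 2%:R = A2.
Proof.
split=> [tf | A2E c x].
- apply: form1P => x; split.
  + apply: (eq_of_subr_scale (c := - 2^-1) (tf o2 x)).
    by rewrite -/(torsion Th A o2 x) torsion_o2E /A2 /torsion_free_A2 /mkF1 /de /=; field.
  + apply: (eq_of_subr_scale (c := 2^-1) (tf o1 x)).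
    by rewrite -/(torsion Th A o1 x) torsion_o1E /A2 /torsion_free_A2 /mkF1 /de /=; field.
- change (torsion Th A c x = 0); have [->|->] := ord2P c;
    by rewrite ?torsion_o1E ?torsion_o2E A2E /A2 /torsion_free_A2 /mkF1 /de /=; field.
Qed.

Lemma cotorsion_freeP : torsion_free Th A ->
  cotorsion_free Th A <->
  (forall x, shift o1 a x + shift o2 a x = 0) /\ (forall x, shift o1 b x + shift o2 b x = 0).
Proof.
move=> tf.
have cot1 x : cotorsion Th A o1 x = - (shift o1 a x + shift o2 a x).
  by rewrite -cotorsion_torsion_o1 [shift _ _ x](tf o1) addr0.
have cot2 x : cotorsion Th A o2 x = shift o1 b x + shift o2 b x.
  by rewrite -cotorsion_torsion_o2 [shift _ _ x](tf o2) addr0.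
split=> [cf | [ha hb] c x].
- split=> x; [apply: oppr_inj; rewrite oppr0 -cot1 | rewrite -cot2]; exact: cf.
- change (cotorsion Th A c x = 0); have [->|->] := ord2P c;
    by rewrite ?cot1 ?cot2 ?ha ?hb ?oppr0.
Qed.

Lemma nabla_e1 : nabla Th A (eform R o1) =
  mkF11 (fun x => A 1 o1 x + 2 * A 2%:R o1 x + A 3%:R o1 x) (fun x => A 3%:R o1 x - A 1 o1 x)
        (fun x => A 1 o2 x + 2 * A 2%:R o2 x + A 3%:R o2 x) (fun x => A 3%:R o2 x - A 1 o2 x).
Proof.
apply: functional_extensionality => i; apply: functional_extensionality => j.
apply: functional_extensionality => x.
have [->|->] := ord2P i; have [->|->] := ord2P j;
  rewrite /nabla !big_ord_recl big_ord0 !sum_Z4_nonzero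
    /dfun /dbar /shift /eform /mkF11 /fact /frame_act /= /rot1 /ebasis /=; ring.
Qed.

Lemma nabla_e2 : nabla Th A (eform R o2) =
  mkF11 (fun x => A 1 o1 x - A 3%:R o1 x) (fun x => A 1 o1 x + 2 * A 2%:R o1 x + A 3%:R o1 x)
        (fun x => A 1 o2 x - A 3%:R o2 x) (fun x => A 1 o2 x + 2 * A 2%:R o2 x + A 3%:R o2 x).
Proof.
apply: functional_extensionality => i; apply: functional_extensionality => j.
apply: functional_extensionality => x.
have [->|->] := ord2P i; have [->|->] := ord2P j;
  rewrite /nabla !big_ord_recl big_ord0 !sum_Z4_nonzero
    /dfun /dbar /shift /eform /mkF11 /fact /frame_act /= /rot1 /ebasis /=; ring.
Qed.

End DiscreteTorus.

Theorem proposition4p2 (R : numFieldType) (Theta1 Theta2 : Fun R)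
  (hT1 : forall x, Theta1 x != 0) (hT2 : forall x, Theta2 x != 0)
  (hcomp : forall x, Theta1 x * shift o1 Theta2 x = Theta2 x * shift o2 Theta1 x) :
  let Th := mkF1 Theta1 Theta2 in
  let s1 := dbar o2 Theta1 in
  let s2 := dbar o1 Theta2 in
  (forall A : 'Z_4 -> Form1 R,
     (torsion_free Th A /\ cotorsion_free Th A) <->
     exists al be ga dl : Fun R,
       (forall x, shift o1 (fun y => ga y - al y) x + shift o2 (fun y => ga y - al y) x = 0) /\
       (forall x, shift o1 (fun y => be y - dl y) x + shift o2 (fun y => be y - dl y) x = 0) /\
       A 1 = mkF1 al be /\
       A 2%:R = mkF1 (fun x => (- al x + be x - ga x - dl x - s1 x) / 2)
                     (fun x => (- al x - be x + ga x - dl x - s2 x) / 2) /\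
       A 3%:R = mkF1 ga dl)
  /\
  (forall (A : 'Z_4 -> Form1 R) (al be ga dl : Fun R),
     let a := fun y => ga y - al y in
     let b := fun y => be y - dl y in
     (forall x, shift o1 a x + shift o2 a x = 0) ->
     (forall x, shift o1 b x + shift o2 b x = 0) ->
     A 1 = mkF1 al be ->
     A 2%:R = mkF1 (fun x => (- al x + be x - ga x - dl x - s1 x) / 2)
                   (fun x => (- al x - be x + ga x - dl x - s2 x) / 2) ->
     A 3%:R = mkF1 ga dl ->
     nabla Th A (eform R o1) =
       mkF11 (fun x => b x - s1 x) a (fun x => a x - s2 x) (fun x => - b x) /\
     nabla Th A (eform R o2) =
       mkF11 (fun x => - a x) (fun x => b x - s1 x) b (fun x => a x - s2 x)).
Proof.
move=> Th s1 s2; split.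
- move=> A; split.
  + case=> /[dup] tf /torsion_freeP A2E /(cotorsion_freeP tf) [ha hb].
    exists (A 1 o1), (A 1 o2), (A 3%:R o1), (A 3%:R o2).
    by do !split=> //; exact: mkF1_eta.
  + case=> al [be [ga [dl [ha [hb [h1 [h2 h3]]]]]]].
    have tf : torsion_free Th A by apply/torsion_freeP; rewrite h2 h1 h3.
    by split=> //; apply/(cotorsion_freeP tf); rewrite h1 h3.
- move=> A al be ga dl a b _ _ h1 h2 h3.
  rewrite nabla_e1 nabla_e2 h1 h2 h3 /a /b /s1 /s2.
  by split; congr mkF11; apply: functional_extensionality => x; rewrite /mkF1 /=; field.
Qed.
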